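(* Let $R$ be a semilocal commutative ring in which $2$ is invertible, $I$ an ideal of $R$, and $n\ge3$. Equip $R^{2n+1}$ with the standard form of matrix $\tilde\phi_{2n+1}=(2)\perp\widetilde{\psi}_n$. Let $u\in R^{2n+1}$ be an isotropic unimodular vector and $v\in I^{2n+1}$ with $\langle u,v\rangle=0$. Then $\sigma_{u,v}\in\mathrm{EO}_{2n+1}(R,I)$.
   Context: $e_{i,j}$ are matrix units and $\widetilde{\psi}_s=\sum_{i=1}^s(e_{2i-1,2i}+e_{2i,2i-1})$. On $R^{2n+1}$ the bilinear form is $\langle a,b\rangle=a^t\tilde\phi_{2n+1}b$ and the quadratic form is $q(a)=\tfrac12\langle a,a\rangle$. For $u,v$ with $u$ unimodular, $q(u)=0$, $\langle u,v\rangle=0$ and $r=q(v)$, the Eichler–Siegel–Dickson transvection is $\sigma_{u,v}(x)=x+\langle v,x\rangle u-\langle u,x\rangle v-r\langle u,x\rangle u$. Odd elementary orthogonal group: for $N=2s+1$ and $1\le i\le s$, $F^1_i(\lambda)=I_N+\lambda(e_{1,2i+1}-2e_{2i,1}-\lambda e_{2i,2i+1})$, $F^2_i(\lambda)=I_N+\lambda(e_{1,2i}-2e_{2i+1,1}-\lambda e_{2i+1,2i})$. $\mathrm{EO}_{2s+1}(R)$ is generated by these with $\lambda\in R$, $\mathrm{EO}_{2s+1}(I)$ by those with $\lambda\in I$, and $\mathrm{EO}_{2s+1}(R,I)$ is the normal closure of $\mathrm{EO}_{2s+1}(I)$ in $\mathrm{EO}_{2s+1}(R)$. *)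

From HB Require Import structures.
From mathcomp Require Import all_boot all_order all_algebra.
Set Implicit Arguments. Unset Strict Implicit. Unset Printing Implicit Defensive.
Import GRing.Theory.
Local Open Scope ring_scope.

Section Defs.
Variable R : comUnitRingType.

Definition is_ideal (I : R -> Prop) : Prop :=
  I 0 /\ (forall x y, I x -> I y -> I (x - y)) /\ (forall r x, I x -> I (r * x)).

Definition is_maximal_ideal (M : R -> Prop) : Prop :=
  is_ideal M /\ ~ M 1 /\
  forall J : R -> Prop, is_ideal J -> (forall x, M x -> J x) -> ~ J 1 ->
    forall x, J x -> M x.

Definition semilocal : Prop :=
  exists (k : nat) (Ms : nat -> R -> Prop),
    forall M, is_maximal_ideal M ->
      exists i, (i < k)%N /\ forall x, M x <-> Ms i x.

Variable n : nat.
Local Notation N := (n.*2).+1.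

(* Standard form matrix phi~_{2n+1} = (2) _|_ psi~_n.
   0-based indices: (0,0) -> 2; pairs (2i-1, 2i), i = 1..n, carry 1. *)
Definition phi_std : 'M[R]_N :=
  \matrix_(i < N, j < N)
    if (i == 0 :> nat) && (j == 0 :> nat) then 2%:R
    else if (odd i && (j == i.+1 :> nat)) || (odd j && (i == j.+1 :> nat))
    then 1 else 0.

Definition bform (a b : 'cV[R]_N) : R := (a^T *m phi_std *m b) 0 0.
Definition qform (a : 'cV[R]_N) : R := 2%:R^-1 * bform a a.

Definition unimodular (u : 'cV[R]_N) : Prop :=
  exists w : 'cV[R]_N, \sum_(i < N) u i 0 * w i 0 = 1.

(* Eichler--Siegel--Dickson transvection, as the matrix of
   x |-> x + <v,x> u - <u,x> v - r <u,x> u with r = q(v). *)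
Definition ESD (u v : 'cV[R]_N) : 'M[R]_N :=
  1%:M + u *m (v^T *m phi_std) - v *m (u^T *m phi_std)
       - qform v *: (u *m (u^T *m phi_std)).

(* Matrix units, 1-based indices k,l in 1..N. *)
Definition E (k l : nat) : 'M[R]_N := delta_mx (inord k.-1) (inord l.-1).

Definition F1 (i : nat) (lam : R) : 'M[R]_N :=
  1%:M + lam *: (E 1 (i.*2.+1) - 2%:R *: E (i.*2) 1 - lam *: E (i.*2) (i.*2.+1)).
Definition F2 (i : nat) (lam : R) : 'M[R]_N :=
  1%:M + lam *: (E 1 (i.*2) - 2%:R *: E (i.*2.+1) 1 - lam *: E (i.*2.+1) (i.*2)).

Inductive gen_group (S : 'M[R]_N -> Prop) : 'M[R]_N -> Prop :=
  | gg_gen x : S x -> gen_group S x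
  | gg_one : gen_group S 1%:M
  | gg_mul x y : gen_group S x -> gen_group S y -> gen_group S (x *m y)
  | gg_inv x : gen_group S x -> gen_group S (invmx x).

Definition elem_gens (J : R -> Prop) (g : 'M[R]_N) : Prop :=
  exists i lam, (1 <= i <= n)%N /\ J lam /\ (g = F1 i lam \/ g = F2 i lam).

Definition EO (J : R -> Prop) : 'M[R]_N -> Prop := gen_group (elem_gens J).

Definition EO_rel (I : R -> Prop) : 'M[R]_N -> Prop :=
  gen_group (fun g => exists a h, EO (fun _ => True) a /\ EO I h /\
                                  g = a *m h *m invmx a).
End Defs.

From Pilot Require Import Defs.
From mathcomp Require Import all_boot all_order all_algebra.
From mathcomp Require Import ring zify.
From mathcomp Require Import boolp classical_sets.
Set Implicit Arguments. Unset Strict Implicit. Unset Printing Implicit Defensive.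
Import GRing.Theory.
Local Open Scope ring_scope.

(* Write (e, f) for the first hyperbolic pair of the standard basis, e_0 for
   the basis vector of the (2) block and ESD(u, v) for sigma_{u,v}.  Since
   g ESD(u, v) g^-1 = ESD(g u, g v) for every isometry g, it suffices to find
   g in EO(R) with g u = a e for a unit a: then ESD(u, v) is conjugate to
   ESD(e, a g v), whose second argument still lies in I^N.
   Such a g is ESD(f, w') ESD(e, w), where w makes the e-coordinate of
   ESD(e, w) u a unit.  Modulo one maximal ideal a suitable w is read off the
   coordinates of u (unimodularity and isotropy exclude the bad cases); as R
   is semilocal, the Chinese remainder theorem glues these local choices.
   Then ESD(f, w') clears all coordinates but those along e and f, and
   isotropy kills the f-coordinate.
   Finally, ESD(e, w) with w orthogonal to e is additive in w, and each
   ESD(e, c e_j) equals X^-1 (g X g^-1) for the generator X = ESD(e, c e_0)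
   and g = ESD(e_j', e_0/2), j' the partner of j; so ESD(e, w) lies in every
   group containing the generators ESD(e, c e_0), c in I, and stable under
   conjugation by EO(R). *)

Section Ideals.
Variable R : comUnitRingType.

Section IdealClosure.
Variable M : R -> Prop.
Hypothesis idM : is_ideal M.

Lemma ideal0 : M 0. Proof. by case: idM. Qed.
Lemma idealB x y : M x -> M y -> M (x - y). Proof. by case: idM => _ [+ _]; apply. Qed.
Lemma idealMl r x : M x -> M (r * x). Proof. by case: idM => _ [_]; apply. Qed.
Lemma idealMr r x : M x -> M (x * r). Proof. by rewrite mulrC; apply: idealMl. Qed.
Lemma idealN x : M x -> M (- x). Proof. by rewrite -sub0r; apply/idealB/ideal0. Qed.
Lemma idealD x y : M x -> M y -> M (x + y).
Proof. by move=> Mx My; rewrite -[y]opprK; apply/idealB/idealN. Qed.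

Lemma ideal_sum (I : finType) (P : pred I) (F : I -> R) :
  (forall i, P i -> M (F i)) -> M (\sum_(i | P i) F i).
Proof. by move=> MF; apply: big_ind => //; [apply: ideal0 | apply: idealD]. Qed.

Lemma ideal_notin_congr x y : ~ M y -> M (x - y) -> ~ M x.
Proof. by move=> My Mxy Mx; apply: My; rewrite -(subKr x y); apply: idealB. Qed.

End IdealClosure.

Lemma ideal_add_principal (M : R -> Prop) (a : R) : is_ideal M ->
  is_ideal (fun z => exists m r, M m /\ z = m + r * a).
Proof.
move=> idM; split; first by exists 0, 0; rewrite mul0r addr0; split => //; apply: ideal0.
split=> [_ _ [m1 [r1 [Mm1 ->]]] [m2 [r2 [Mm2 ->]]] | r _ [m [s [Mm ->]]]].
  exists (m1 - m2), (r1 - r2); split; first exact: idealB.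
  by rewrite mulrBl opprD addrACA.
exists (r * m), (r * s); split; first exact: idealMl.
by rewrite mulrDr mulrA.
Qed.

Lemma principal_ideal (x : R) : is_ideal (fun z => exists r, z = r * x).
Proof.
split; first by exists 0; rewrite mul0r.
split=> [_ _ [r ->] [s ->] | r _ [s ->]]; first by exists (r - s); rewrite mulrBl.
by exists (r * s); rewrite mulrA.
Qed.

Lemma maximal_comaximal (M : R -> Prop) (a : R) : is_maximal_ideal M -> ~ M a ->
  exists m r, M m /\ m + r * a = 1.
Proof.
case=> idM [M1 maxM] Ma.
have MMa x : M x -> exists m r, M m /\ x = m + r * a.
  by move=> Mx; exists x, 0; rewrite mul0r addr0.
have [[m [r [Mm e]]]|NMa1] := pselect (exists m r, M m /\ 1 = m + r * a).
  by exists m, r.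
exfalso; apply/Ma/(maxM _ (ideal_add_principal a idM) MMa NMa1).
by exists 0, 1; rewrite mul1r add0r; split => //; apply: ideal0.
Qed.

Lemma maximal_prime (M : R -> Prop) a b : is_maximal_ideal M -> M (a * b) -> M a \/ M b.
Proof.
move=> maxM Mab; have idM : is_ideal M by case: maxM.
have [Ma|Ma] := pselect (M a); [by left | right].
have [m [r [Mm e]]] := maximal_comaximal maxM Ma.
rewrite -[b]mul1r -e mulrDl -mulrA.
by apply: (idealD idM); [apply: (idealMr idM) | apply: (idealMl idM)].
Qed.

Definition proper_ideal_at (x : R) (X : R -> Prop) := [/\ is_ideal X, X x & ~ X 1].

Lemma chain_proper_ideal_at (x : R) (F : set (R -> Prop)) :
  (forall X, F X -> X = set0 \/ proper_ideal_at x X) -> total_on F subset ->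
  (\bigcup_(X in F) X)%classic = set0 \/ proper_ideal_at x (\bigcup_(X in F) X)%classic.
Proof.
move=> FP Ftot.
have FPx X y : F X -> X y -> proper_ideal_at x X.
  by move=> FX Xy; case: (FP X FX) => // X0; rewrite X0 in Xy.
have [[X0 [FX0 X0x]] | Fx] := pselect (exists X, F X /\ X x); last first.
  left; apply: bigcup0 => X FX; case: (FP X FX) => // -[_ Xx _].
  by exfalso; apply: Fx; exists X.
right; have [idX0 _ _] := FPx X0 x FX0 X0x.
split; [split | by exists X0 | by case=> X FX X1; case: (FPx X 1 FX X1)].
- by exists X0 => //; apply: ideal0 idX0.
split=> [y z [Y FY Yy] [Z FZ Zz] | r y [Y FY Yy]]; last first.
  by case: (FPx Y y FY Yy) => idY _ _; exists Y => //; apply: idealMl.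
have [YZ|ZY] := Ftot Y Z FY FZ.
  by case: (FPx Z z FZ Zz) => idZ _ _; exists Z => //; apply: idealB => //; apply: YZ.
by case: (FPx Y y FY Yy) => idY _ _; exists Y => //; apply: idealB => //; apply: ZY.
Qed.

Lemma nonunit_maximal (x : R) : x \isn't a GRing.unit ->
  exists M, is_maximal_ideal M /\ M x.
Proof.
move=> xN.
(* set0 is admitted because it is the union of the empty chain; it is never
   maximal, being strictly contained in the principal ideal of x. *)
have [M [PM maxM]] := Zorn_bigcup (@chain_proper_ideal_at x).
have [M0 | [idM Mx M1]] := PM.
  exfalso; apply: (maxM (fun z => exists r, z = r * x) _ (or_intror _)); last first.
    split; [exact: principal_ideal | by exists 1; rewrite mul1r |].
    by move=> [r r1]; move/negP: xN; apply; apply/unitrPr; exists r; rewrite mulrC.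
  by rewrite M0; split => // /(_ 0); apply; exists 0; rewrite mul0r.
exists M; split=> //; split=> //; split=> // J idJ MJ J1 y Jy.
apply: contrapT => My; apply: (maxM J); last by right; split => //; apply: MJ.
by split=> // /(_ y Jy).
Qed.

Lemma maximal_separation (J : R -> Prop) (Ms : nat -> R -> Prop) k : is_ideal J ->
  (forall i, (i < k)%N -> is_maximal_ideal (Ms i) -> exists2 x, J x & ~ Ms i x) ->
  exists2 e, (forall i, (i < k)%N -> is_maximal_ideal (Ms i) -> Ms i e) & J (1 - e).
Proof.
move=> idJ; elim: k => [_|k IH sepJ]; first by exists 1; rewrite // subrr; apply: ideal0.
have [i ik|e Mse Je] := IH; first by apply: sepJ; apply: ltnW.
have [maxMk|maxMk] := pselect (is_maximal_ideal (Ms k)); last first.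
  by exists e => // i; rewrite ltnS leq_eqVlt => /predU1P [->|/Mse].
have idMk : is_ideal (Ms k) by case: maxMk.
have [x Jx Mkx] := sepJ k (ltnSn k) maxMk.
have [m [r [Mkm mrx1]]] := maximal_comaximal maxMk Mkx.
exists (e * m).
  move=> i; rewrite ltnS leq_eqVlt => /predU1P [-> _|ik maxMi]; first exact: idealMl.
  by apply: idealMr; [case: maxMi | apply: Mse].
have -> : 1 - e * m = (1 - e) + (e * r) * x by rewrite -mulrA -(addKr m (r * x)) mrx1; ring.
by apply: (idealD idJ) => //; apply: idealMl.
Qed.

End Ideals.

Section SemilocalUnitValue.
Variables (R : comUnitRingType) (m : nat) (P : 'cV[R]_m -> R) (S : 'cV[R]_m -> Prop).
Hypothesis S0 : S 0.
Hypothesis S_interpolate : forall w w' e, S w -> S w' -> S (w + e *: (w' - w)).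
Hypothesis P_congr : forall M : R -> Prop, is_maximal_ideal M ->
  forall w w' : 'cV_m, (forall i, M (w i 0 - w' i 0)) -> M (P w - P w').
Hypothesis P_local : forall M : R -> Prop, is_maximal_ideal M -> exists2 w, S w & ~ M (P w).

Lemma avoid_maximal_ideals (Ms : nat -> R -> Prop) k :
  exists2 w, S w & forall i, (i < k)%N -> is_maximal_ideal (Ms i) -> ~ Ms i (P w).
Proof.
elim: k => [|k [w Sw Pw]]; first by exists 0.
have [[maxMk MkPw]|good] := pselect (is_maximal_ideal (Ms k) /\ Ms k (P w)); last first.
  exists w => // i; rewrite ltnS leq_eqVlt => /predU1P [-> maxMk MkPw|]; last exact: Pw.
  exact: good.
have idMk : is_ideal (Ms k) by case: maxMk.
have [w' Sw' Pw'] := P_local maxMk.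
(* interpolate with e = 0 modulo the earlier maximal ideals, e = 1 modulo Ms k *)
have [i ik maxMi|e Mse Mke] := maximal_separation (Ms := Ms) (k := k) idMk.
  by exists (P w); last apply: Pw.
exists (w + e *: (w' - w)); first exact: S_interpolate.
move=> i; rewrite ltnS leq_eqVlt => /predU1P [-> _|ik maxMi].
  apply: (ideal_notin_congr idMk Pw'); apply: P_congr => // j.
  have -> : (w + e *: (w' - w)) j 0 - w' j 0 = (1 - e) * (w j 0 - w' j 0) by rewrite !mxE; ring.
  exact: idealMr.
have idMi : is_ideal (Ms i) by case: maxMi.
apply: (ideal_notin_congr idMi (Pw i ik maxMi)); apply: P_congr => // j.
have -> : (w + e *: (w' - w)) j 0 - w j 0 = e * (w' j 0 - w j 0) by rewrite !mxE; ring.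
by apply: idealMr; last apply: Mse.
Qed.

Lemma semilocal_unit_value : semilocal R -> exists2 w, S w & P w \is a GRing.unit.
Proof.
case=> k [Ms enumMs]; have [w Sw Pw] := avoid_maximal_ideals Ms k.
exists w => //; apply: contrapT => /negP /nonunit_maximal [M [maxM MPw]].
have [i [ik MMs]] := enumMs M maxM.
have EM : M = Ms i by apply: funext => x; apply: propext.
by subst M; apply: Pw i ik maxM MPw.
Qed.

End SemilocalUnitValue.

Section Form.
Variables (R : comUnitRingType) (n : nat).
Local Notation N := (n.*2).+1.
Local Notation vec := 'cV[R]_N.
Local Notation mat := 'M[R]_N.
Local Notation phi := (@phi_std R n).
Local Notation bform := (@bform R n).
Local Notation qform := (@qform R n).

Definition ev (j : 'I_N) : vec := delta_mx j 0.

Lemma evE i j : ev j i 0 = (i == j)%:R.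
Proof. by rewrite mxE eqxx andbT. Qed.

Lemma vec_sum_ev (x : vec) : x = \sum_i x i 0 *: ev i.
Proof. by rewrite {1}[x]matrix_sum_delta; apply: eq_bigr => i _; rewrite big_ord1. Qed.

(* Indices are 0-based: index 0 carries the (2) block and, for j > 0, pt j is
   the partner of j in the hyperbolic pairs (2i-1, 2i) of psi~_n. *)
Definition pt (j : 'I_N) : 'I_N := inord (if odd j then j.+1 else j.-1).

Lemma pt_val (j : 'I_N) : (0 < j)%N -> pt j = (if odd j then j.+1 else j.-1) :> nat.
Proof. by move=> j0; rewrite inordK //; have := ltn_ord j; case: ifP => oj; lia. Qed.

Lemma pt_gt0 (j : 'I_N) : (0 < j)%N -> (0 < pt j)%N.
Proof. by move=> j0; rewrite pt_val //; case: ifP; lia. Qed.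

Lemma ptK (j : 'I_N) : (0 < j)%N -> pt (pt j) = j.
Proof.
move=> j0; apply: val_inj; rewrite /= pt_val ?pt_gt0 // pt_val //.
by case oj: (odd j); case: ifP; lia.
Qed.

Lemma pt_neq (j : 'I_N) : (0 < j)%N -> pt j != j.
Proof. by move=> j0; rewrite -val_eqE /= pt_val //; case: ifP; lia. Qed.

Lemma pt_gt2 (j : 'I_N) : (2 < j)%N -> (2 < pt j)%N.
Proof. by move=> j2; rewrite pt_val; [case: ifP; lia | lia]. Qed.

Lemma phi_sym : phi^T = phi.
Proof. by apply/matrixP=> i j; rewrite !mxE andbC orbC. Qed.

Lemma phi_row0 (l : 'I_N) : phi 0 l = (l == 0)%:R * 2%:R.
Proof. by rewrite mxE -val_eqE /=; case: (_ == 0 :> nat); rewrite ?mul1r ?mul0r // andbF. Qed.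

Lemma phi_row (j l : 'I_N) : (0 < j)%N -> phi j l = (l == pt j)%:R.
Proof.
move=> j0; rewrite mxE -val_eqE /= pt_val //.
have -> : (j == 0 :> nat) = false by lia.
have -> : (odd j && (l == j.+1 :> nat)) || (odd l && (j == l.+1 :> nat)) =
    (l == (if odd j then j.+1 else j.-1) :> nat) by case oj: (odd j); lia.
by rewrite /=; case: (_ == _).
Qed.

Lemma bform_sym (a b : vec) : bform a b = bform b a.
Proof.
transitivity ((a^T *m phi *m b)^T 0 0); first by rewrite mxE.
by rewrite !trmx_mul trmxK phi_sym mulmxA.
Qed.

Lemma bformDr (a b c : vec) : bform a (b + c) = bform a b + bform a c.
Proof. by rewrite /Defs.bform mulmxDr mxE. Qed.
Lemma bformZr k (a b : vec) : bform a (k *: b) = k * bform a b.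
Proof. by rewrite /Defs.bform -scalemxAr mxE. Qed.
Lemma bformNr (a b : vec) : bform a (- b) = - bform a b.
Proof. by rewrite -scaleN1r bformZr mulN1r. Qed.
Lemma bform0r (a : vec) : bform a 0 = 0.
Proof. by rewrite -(scale0r 0) bformZr mul0r. Qed.
Lemma bformDl (a b c : vec) : bform (a + b) c = bform a c + bform b c.
Proof. by rewrite !(bform_sym _ c) bformDr. Qed.
Lemma bformZl k (a b : vec) : bform (k *: a) b = k * bform a b.
Proof. by rewrite !(bform_sym _ b) bformZr. Qed.
Lemma bformNl (a b : vec) : bform (- a) b = - bform a b.
Proof. by rewrite !(bform_sym _ b) bformNr. Qed.

Lemma bform_evE (i : 'I_N) (y : vec) : bform (ev i) y = (phi *m y) i 0.
Proof. by rewrite /Defs.bform trmx_delta -mulmxA -rowE mxE. Qed.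

Lemma bform_sumE (x y : vec) : bform x y = \sum_i x i 0 * bform (ev i) y.
Proof.
by rewrite [LHS]/Defs.bform -mulmxA mxE; apply: eq_bigr => i _; rewrite mxE bform_evE.
Qed.

Lemma bform_ev0 (y : vec) : bform (ev 0) y = 2%:R * y 0 0.
Proof.
rewrite bform_evE mxE (bigD1 0) //= big1 => [|l l0].
  by rewrite phi_row0 eqxx mul1r addr0.
by rewrite phi_row0 (negbTE l0) !mul0r.
Qed.

Lemma bform_ev (j : 'I_N) (y : vec) : (0 < j)%N -> bform (ev j) y = y (pt j) 0.
Proof.
move=> j0; rewrite bform_evE mxE (bigD1 (pt j)) //= big1 => [|l l0].
  by rewrite phi_row // eqxx mul1r addr0.
by rewrite phi_row // (negbTE l0) mul0r.
Qed.

Lemma bform_ev_ev (p q : 'I_N) : (0 < p)%N -> bform (ev p) (ev q) = (q == pt p)%:R.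
Proof. by move=> p0; rewrite bform_ev // evE eq_sym. Qed.

Lemma ev_isotropic (q : 'I_N) : (0 < q)%N -> bform (ev q) (ev q) = 0.
Proof. by move=> q0; rewrite bform_ev_ev // eq_sym (negbTE (pt_neq q0)). Qed.

Lemma ev_orth_ev0 (q : 'I_N) : (0 < q)%N -> bform (ev q) (ev 0) = 0.
Proof. by move=> q0; rewrite bform_ev_ev // -val_eqE /= eq_sym eqn0Ngt pt_gt0. Qed.

Lemma bform_coordE (x y : vec) :
  bform x y = 2%:R * (x 0 0 * y 0 0) + \sum_(i | i != 0) x i 0 * y (pt i) 0.
Proof.
rewrite bform_sumE (bigD1 0) //= bform_ev0 mulrCA; congr (_ + _).
by apply: eq_bigr => i i0; rewrite bform_ev // lt0n.
Qed.

Lemma bform_ideal (M : R -> Prop) (x y : vec) : is_ideal M ->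
  (forall i, M (x i 0)) -> M (bform x y).
Proof. by move=> idM Mx; rewrite bform_sumE; apply: ideal_sum => // i _; apply: idealMr. Qed.

Lemma qformZ k (a : vec) : qform (k *: a) = k ^+ 2 * qform a.
Proof. by rewrite /Defs.qform bformZl bformZr; ring. Qed.

Lemma mxmul_ext (A B : mat) : (forall x : vec, A *m x = B *m x) -> A = B.
Proof.
move=> eqAB; apply/matrixP=> i j.
by have := congr1 (fun y : vec => y i 0) (eqAB (delta_mx j 0)); rewrite -!colE !mxE.
Qed.

Lemma ESD_apply (u v x : vec) :
  ESD u v *m x = x + bform v x *: u - bform u x *: v - (qform v * bform u x) *: u.
Proof.
have rank1 (a b : vec) : a *m (b^T *m phi) *m x = bform b x *: a.
  by rewrite -mulmxA (mx11_scalar (b^T *m phi *m x)) mul_mx_scalar.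
by rewrite /ESD !mulmxDl !mulNmx mul1mx !rank1 -scalemxAl rank1 scalerA.
Qed.

Lemma ESD0 (u : vec) : ESD u 0 = 1%:M.
Proof.
apply: mxmul_ext => x; rewrite ESD_apply mul1mx /Defs.qform bform_sym !bform0r.
by rewrite mulr0 mul0r !scale0r scaler0 !subr0 addr0.
Qed.

Lemma ESD_scale (a : R) (u w : vec) : ESD (a *: u) w = ESD u (a *: w).
Proof.
apply: mxmul_ext => x; rewrite !ESD_apply qformZ !bformZl.
by apply/matrixP => i j; rewrite !mxE; ring.
Qed.

Lemma ESD_self (c : R) (u : vec) : bform u u = 0 -> ESD u (c *: u) = 1%:M.
Proof.
move=> uu; apply: mxmul_ext => x; rewrite !ESD_apply mul1mx qformZ /Defs.qform uu bformZl.
by apply/matrixP => i j; rewrite !mxE; ring.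
Qed.

Lemma ESD_conj (g : mat) (u v : vec) :
  (forall x y : vec, bform (g *m x) (g *m y) = bform x y) ->
  g *m ESD u v = ESD (g *m u) (g *m v) *m g.
Proof.
move=> gform; apply: mxmul_ext => x.
by rewrite -!mulmxA !ESD_apply /Defs.qform !gform !mulmxDr !mulmxN -!scalemxAr.
Qed.

Definition is_isometry (g : mat) :=
  g \in unitmx /\ forall x y : vec, bform (g *m x) (g *m y) = bform x y.

Lemma gen_group_isometry (S : mat -> Prop) (g : mat) :
  (forall x, S x -> is_isometry x) -> gen_group S g -> is_isometry g.
Proof.
move=> Siso; elim=> [x /Siso // | | x y _ [xU xf] _ [yU yf] | x _ [xU xf]].
- by split=> [|a b]; [exact: unitmx1 | rewrite !mul1mx].
- by split=> [|a b]; [rewrite unitmx_mul xU yU | rewrite -!mulmxA xf yf].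
- by split=> [|a b]; [rewrite unitmx_inv | rewrite -xf !mulKVmx].
Qed.

Lemma invmxM (A B : mat) : A \in unitmx -> B \in unitmx ->
  invmx (A *m B) = invmx B *m invmx A.
Proof.
move=> AU BU; rewrite -[RHS]mulmx1 -(mulmxV (_ : A *m B \in unitmx)); last first.
  by rewrite unitmx_mul AU BU.
by rewrite !mulmxA mulmxKV // mulVmx // mul1mx.
Qed.

Lemma invmx_conj (a y : mat) : a \in unitmx ->
  invmx (a *m y *m invmx a) = a *m invmx y *m invmx a.
Proof.
move=> aU; have [yU|yN] := boolP (y \in unitmx).
  by rewrite !invmxM ?unitmx_mul ?unitmx_inv ?aU ?yU // invmxK mulmxA.
rewrite [invmx y]invmx_out ?inE // invmx_out // inE !unitmx_mul unitmx_inv aU.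
by rewrite (negbTE yN).
Qed.

Lemma gen_group_conj (S : mat -> Prop) (a g : mat) : a \in unitmx ->
  (forall x, S x -> gen_group S (a *m x *m invmx a)) ->
  gen_group S g -> gen_group S (a *m g *m invmx a).
Proof.
move=> aU Sa; elim=> [x /Sa // | | x y _ Gx _ Gy | x _ Gx].
- by rewrite mulmx1 mulmxV //; apply: gg_one.
- suff -> : a *m (x *m y) *m invmx a = (a *m x *m invmx a) *m (a *m y *m invmx a).
    exact: gg_mul.
  by rewrite !mulmxA mulmxKV.
- by rewrite -invmx_conj //; apply: gg_inv.
Qed.

Section TwoUnit.
Hypothesis two_unit : (2%:R : R) \is a GRing.unit.

Lemma qformE (v : vec) : bform v v = 2%:R * qform v.
Proof. by rewrite /Defs.qform mulrA mulrV // mul1r. Qed.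

Lemma qformD (a b : vec) : qform (a + b) = qform a + qform b + bform a b.
Proof.
apply: (mulrI two_unit); rewrite -qformE bformDl !bformDr (bform_sym b a).
by rewrite !mulrDr -!qformE; ring.
Qed.

Lemma qform_ev0 : qform (ev 0) = 1.
Proof. by rewrite /Defs.qform bform_ev0 evE eqxx mulr1 mulVr. Qed.

Lemma ESD_add (u v1 v2 : vec) : bform u u = 0 -> bform u v1 = 0 -> bform u v2 = 0 ->
  ESD u (v1 + v2) = ESD u v1 *m ESD u v2.
Proof.
move=> uu uv1 uv2; apply: mxmul_ext => x; rewrite -mulmxA !ESD_apply.
rewrite !bformDr !bformNr !bformZr !bformDl qformD uu uv2 (bform_sym v1 u) uv1.
by apply/matrixP => i j; rewrite !mxE; ring.
Qed.

Lemma ESD_isometry (u v : vec) : bform u u = 0 -> bform u v = 0 -> is_isometry (ESD u v).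
Proof.
move=> uu uv; split.
  have : ESD u v *m ESD u (- v) = 1%:M.
    by rewrite -ESD_add ?subrr ?ESD0 // bformNr uv oppr0.
  by case/mulmx1_unit.
move=> x y; rewrite !ESD_apply !bformDl !bformNl !bformDr !bformNr !bformZl !bformZr.
by rewrite uu uv (bform_sym v u) uv qformE (bform_sym x u) (bform_sym x v); ring.
Qed.

Lemma ESD_ev_ev0_isometry (q : 'I_N) c : (0 < q)%N -> is_isometry (ESD (ev q) (c *: ev 0)).
Proof. by move=> q0; apply: ESD_isometry; rewrite ?bformZr ?ev_isotropic ?ev_orth_ev0 ?mulr0. Qed.

Lemma ESD_ev_ev0 (q : 'I_N) lam : (0 < q)%N ->
  ESD (ev q) (- lam *: ev 0) =
  1%:M + lam *: (delta_mx 0 (pt q) - 2%:R *: delta_mx q 0 - lam *: delta_mx q (pt q)).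
Proof.
move=> q0; apply: mxmul_ext => x.
have delta_mul (a b : 'I_N) : delta_mx a b *m x = x b 0 *: ev a.
  rewrite -[delta_mx a b](mul_delta_mx (0 : 'I_1)) -mulmxA -rowE.
  by rewrite (mx11_scalar (row b x)) mul_mx_scalar mxE.
rewrite ESD_apply bformZl bform_ev0 bform_ev // qformZ qform_ev0.
rewrite mulmxDl mul1mx -scalemxAl !mulmxDl !mulNmx -!scalemxAl !delta_mul.
by apply/matrixP => a b; rewrite !mxE; ring.
Qed.

Lemma inord0 : (inord 0 : 'I_N) = 0.
Proof. by apply: val_inj; rewrite /= inordK. Qed.

Lemma F1_ESD i lam : (1 <= i <= n)%N ->
  F1 n i lam = ESD (ev (inord i.*2.-1)) (- lam *: ev 0).
Proof.
move=> i_n; have q_val : (inord i.*2.-1 : 'I_N) = i.*2.-1 :> nat by rewrite inordK; lia.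
have p_val : (inord i.*2 : 'I_N) = i.*2 :> nat by rewrite inordK; lia.
have ptq : pt (inord i.*2.-1) = inord i.*2.
  by apply: ord_inj; rewrite pt_val q_val ?p_val; [case: ifP; lia | lia].
by rewrite ESD_ev_ev0 ?q_val ?ptq /F1 /E /= ?inord0 //; lia.
Qed.

Lemma F2_ESD i lam : (1 <= i <= n)%N ->
  F2 n i lam = ESD (ev (inord i.*2)) (- lam *: ev 0).
Proof.
move=> i_n; have q_val : (inord i.*2 : 'I_N) = i.*2 :> nat by rewrite inordK; lia.
have p_val : (inord i.*2.-1 : 'I_N) = i.*2.-1 :> nat by rewrite inordK; lia.
have ptq : pt (inord i.*2) = inord i.*2.-1.
  by apply: ord_inj; rewrite pt_val q_val ?p_val; [case: ifP; lia | lia].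
by rewrite ESD_ev_ev0 ?q_val ?ptq /F2 /E /= ?inord0 //; lia.
Qed.

Lemma ESD_elem_gens (J : R -> Prop) (q : 'I_N) c : (0 < q)%N -> J (- c) ->
  elem_gens J (ESD (ev q) (c *: ev 0)).
Proof.
move=> q0 Jc; rewrite -[c]opprK; have qN := ltn_ord q.
case oq: (odd q).
  exists (q.+1)./2, (- c); split; first lia.
  split=> //; left; rewrite F1_ESD; last lia.
  by suff -> : inord (q.+1)./2.*2.-1 = q by []; apply: ord_inj; rewrite inordK; lia.
exists q./2, (- c); split; first lia.
split=> //; right; rewrite F2_ESD; last lia.
by suff -> : inord q./2.*2 = q by []; apply: ord_inj; rewrite inordK; lia.
Qed.

Lemma elem_gens_ESD (J : R -> Prop) (g : mat) : elem_gens J g ->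
  exists (q : 'I_N) c, (0 < q)%N /\ g = ESD (ev q) (c *: ev 0).
Proof.
case=> i [lam [i_n [_ [->|->]]]].
  by exists (inord i.*2.-1), (- lam); split; [rewrite inordK; lia | exact: F1_ESD].
by exists (inord i.*2), (- lam); split; [rewrite inordK; lia | exact: F2_ESD].
Qed.

Lemma EO_ESD_ev0 (q : 'I_N) c : (0 < q)%N -> EO (fun _ => True) (ESD (ev q) (c *: ev 0)).
Proof. by move=> q0; apply/gg_gen/ESD_elem_gens. Qed.

Lemma EO_isometry (J : R -> Prop) (g : mat) : EO J g -> is_isometry g.
Proof.
apply: gen_group_isometry => x /elem_gens_ESD [q [c [q0 ->]]].
exact: ESD_ev_ev0_isometry.
Qed.

Lemma EO_rel_conj (I : R -> Prop) (a g : mat) :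
  EO (fun _ => True) a -> EO_rel I g -> EO_rel I (a *m g *m invmx a).
Proof.
move=> EOa; have [aU _] := EO_isometry EOa.
apply: gen_group_conj => // _ [b [h [EOb [EOh ->]]]]; apply: gg_gen.
have [bU _] := EO_isometry EOb.
exists (a *m b), h; split; first exact: gg_mul.
by split=> //; rewrite invmxM // !mulmxA.
Qed.

Section HyperbolicGeneration.
Variables (G : mat -> Prop) (J : R -> Prop) (p : 'I_N).
Hypothesis G1 : G 1%:M.
Hypothesis GM : forall x y, G x -> G y -> G (x *m y).
Hypothesis GV : forall x, G x -> G (invmx x).
Hypotheses (p_gt0 : (0 < p)%N) (p_le2 : (p <= 2)%N) (ptp_le2 : (pt p <= 2)%N).
Hypothesis G_ESD_ev0 : forall c, J c -> G (ESD (ev p) (c *: ev 0)).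
Hypothesis G_conj : forall q : 'I_N, (2 < q)%N -> forall x, G x ->
  G (ESD (ev q) (2%:R^-1 *: ev 0) *m x *m invmx (ESD (ev q) (2%:R^-1 *: ev 0))).

Lemma mem_ESD_ev_ev (q : 'I_N) c : (2 < q)%N -> J c -> G (ESD (ev p) (c *: ev q)).
Proof.
move=> q2 Jc; have q0 : (0 < q)%N by lia.
have ptq2 := pt_gt2 q2.
have p0 := ev_orth_ev0 p_gt0.
have pq : bform (ev p) (ev q) = 0.
  by rewrite bform_ev_ev // (_ : q == pt p = false) //; apply/negbTE; rewrite -val_eqE /=; lia.
have qp : bform (ev q) (ev p) = 0.
  by rewrite bform_ev_ev // (_ : p == pt q = false) //; apply/negbTE; rewrite -val_eqE /=; lia.
set g := ESD (ev q) (2%:R^-1 *: ev 0); set X := ESD (ev p) (c *: ev 0).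
have [gU gf] : is_isometry g by apply: ESD_ev_ev0_isometry.
have [XU _] : is_isometry X by apply: ESD_ev_ev0_isometry.
have gp : g *m ev p = ev p.
  rewrite ESD_apply bformZl (bform_sym _ (ev p)) p0 qp.
  by rewrite !(mulr0, scale0r, subr0, addr0).
have g0 : g *m ev 0 = ev 0 + ev q.
  rewrite ESD_apply bformZl bform_ev0 evE eqxx mulr1 mulVr // scale1r ev_orth_ev0 //.
  by rewrite !(mulr0, scale0r, subr0).
have -> : ESD (ev p) (c *: ev q) = invmx X *m (g *m X *m invmx g).
  rewrite ESD_conj // mulmxK // gp -scalemxAr g0 scalerDr ESD_add ?mulKmx ?ev_isotropic //.
    by rewrite bformZr p0 mulr0.
  by rewrite bformZr pq mulr0.
by apply: GM; [apply/GV/G_ESD_ev0 | apply/G_conj/G_ESD_ev0].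
Qed.

Lemma mem_ESD_ev (w : vec) : (forall i, J (w i 0)) -> bform (ev p) w = 0 ->
  G (ESD (ev p) w).
Proof.
move=> Jw pw; have pp := ev_isotropic p_gt0.
pose P (v : vec) := bform (ev p) v = 0 /\ G (ESD (ev p) v).
suff [] : P (\sum_i w i 0 *: ev i) by rewrite -vec_sum_ev.
apply: (big_ind P); first by split; [rewrite bform0r | rewrite ESD0].
  move=> a b [pa Ga] [pb Gb]; split; first by rewrite bformDr pa pb addr0.
  by rewrite ESD_add //; apply: GM.
move=> i _; rewrite /P bformZr.
have [->|i0] := eqVneq i 0.
  by rewrite ev_orth_ev0 // mulr0; split=> //; apply: G_ESD_ev0.
have [->|ip] := eqVneq i p; first by rewrite pp mulr0 ESD_self.
have [->|ipp] := eqVneq i (pt p).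
  by move: pw; rewrite bform_ev // => ->; rewrite mul0r scale0r ESD0.
have i2 : (2 < i)%N.
  by move: i0 ip ipp (pt_neq p_gt0) (pt_gt0 p_gt0); rewrite -!val_eqE /=; lia.
by rewrite bform_ev_ev // (negbTE ipp) mulr0; split=> //; apply: mem_ESD_ev_ev.
Qed.

End HyperbolicGeneration.

Section HyperbolicPair.
Hypothesis n_gt0 : (0 < n)%N.

(* e = ev o1 and f = ev o2 *)
Definition o1 : 'I_N := inord 1.
Definition o2 : 'I_N := inord 2.

Lemma o1_val : o1 = 1%N :> nat. Proof. by rewrite inordK; lia. Qed.
Lemma o2_val : o2 = 2%N :> nat. Proof. by rewrite inordK; lia. Qed.

Lemma pt_o1 : pt o1 = o2.
Proof. by apply: ord_inj; rewrite pt_val o1_val ?o2_val. Qed.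
Lemma pt_o2 : pt o2 = o1.
Proof. by apply: ord_inj; rewrite pt_val o2_val ?o1_val. Qed.

Lemma o1_neq0 : (o1 == 0) = false. Proof. by rewrite -val_eqE /= o1_val. Qed.
Lemma o2_neq0 : (o2 == 0) = false. Proof. by rewrite -val_eqE /= o2_val. Qed.
Lemma o1_neq2 : (o1 == o2) = false. Proof. by rewrite -val_eqE /= o1_val o2_val. Qed.
Lemma o2_neq1 : (o2 == o1) = false. Proof. by rewrite eq_sym o1_neq2. Qed.

Lemma EO_ESD_ev12 (p : 'I_N) (w : vec) : p = o1 \/ p = o2 ->
  bform (ev p) w = 0 -> EO (fun _ => True) (ESD (ev p) w).
Proof.
move=> p12 pw; apply: (mem_ESD_ev (J := fun _ => True)) => //.
- exact: gg_one.
- exact: gg_mul.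
- exact: gg_inv.
- by case: p12 => ->; rewrite ?o1_val ?o2_val.
- by case: p12 => ->; rewrite ?o1_val ?o2_val.
- by case: p12 => ->; rewrite ?pt_o1 ?pt_o2 ?o1_val ?o2_val.
- by move=> c _; apply: EO_ESD_ev0; case: p12 => ->; rewrite ?o1_val ?o2_val.
- move=> q q2 x EOx; have q0 : (0 < q)%N by lia.
  by apply: gg_mul; [apply: gg_mul => // | apply: gg_inv]; apply: EO_ESD_ev0.
Qed.

Lemma EO_rel_ESD_ev1 (I : R -> Prop) (w : vec) : is_ideal I ->
  (forall i, I (w i 0)) -> bform (ev o1) w = 0 -> EO_rel I (ESD (ev o1) w).
Proof.
move=> idI Iw o1w; have o1_gt0 : (0 < o1)%N by rewrite o1_val.
apply: (mem_ESD_ev (J := I)) => //.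
- exact: gg_one.
- exact: gg_mul.
- exact: gg_inv.
- by rewrite o1_val.
- by rewrite pt_o1 o2_val.
- move=> c Ic; apply: gg_gen; exists 1%:M, (ESD (ev o1) (c *: ev 0)).
  split; first exact: gg_one.
  split; last by rewrite mul1mx invmx1 mulmx1.
  by apply/gg_gen/ESD_elem_gens => //; apply: idealN.
- by move=> q q2 x; apply: EO_rel_conj; apply: EO_ESD_ev0; lia.
Qed.

Definition pivot (u w : vec) : R := (ESD (ev o1) w *m u) o1 0.

Lemma pivotE (u w : vec) :
  pivot u w = u o1 0 + bform w u - w o1 0 * u o2 0 - qform w * u o2 0.
Proof.
rewrite /pivot ESD_apply bform_ev ?o1_val // pt_o1 !mxE !eqxx /=.
by rewrite !mulr1 (mulrC (u o2 0)).
Qed.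

Lemma pivot_congr (M : R -> Prop) (u w w' : vec) : is_ideal M ->
  (forall i, M (w i 0 - w' i 0)) -> M (pivot u w - pivot u w').
Proof.
move=> idM Mww'; set d := w - w'.
have Md i : M (d i 0) by rewrite !mxE; apply: Mww'.
have -> : w = w' + d by rewrite addrC subrK.
have Mqd : M (qform d) by apply: (idealMl idM); apply: bform_ideal.
have Mw'd : M (bform w' d) by rewrite bform_sym; apply: bform_ideal.
have -> : pivot u (w' + d) - pivot u w' =
    bform d u - d o1 0 * u o2 0 - (qform d + bform w' d) * u o2 0.
  by rewrite !pivotE qformD bformDl mxE; ring.
apply: idealB => //; last by apply: idealMr => //; apply: idealD.
by apply: idealB => //; [apply: bform_ideal | apply: idealMr].
Qed.

Lemma pivot_ev_pt (u : vec) (j : 'I_N) : (2 < j)%N ->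
  pivot u (ev (pt j)) = u o1 0 + u j 0.
Proof.
move=> j2; have ptj2 := pt_gt2 j2.
have /negbTE o1j : o1 != pt j by rewrite -val_eqE /= o1_val; lia.
rewrite pivotE bform_ev ?ptK /Defs.qform ?ev_isotropic ?evE ?o1j; try lia.
by rewrite /=; ring.
Qed.

Lemma pivot_ev0 (u : vec) : pivot u (ev 0) = u o1 0 + 2%:R * u 0 0 - u o2 0.
Proof. by rewrite pivotE bform_ev0 qform_ev0 evE o1_neq0 /=; ring. Qed.

Lemma isotropic_coord0_mem (u : vec) (M : R -> Prop) : is_maximal_ideal M ->
  bform u u = 0 -> (forall i, i != 0 -> i != o2 -> M (u i 0)) -> M (u 0 0).
Proof.
move=> maxM uu Mu; have idM : is_ideal M by case: maxM.
have M2u0 : M (2%:R * (u 0 0 * u 0 0)).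
  have -> : 2%:R * (u 0 0 * u 0 0) = - \sum_(i | i != 0) u i 0 * u (pt i) 0.
    by apply/eqP; rewrite -subr_eq0 opprK -bform_coordE uu.
  apply: idealN => //; apply: ideal_sum => // i i0.
  have [io2|io2] := eqVneq i o2; last by apply: idealMr => //; apply: Mu.
  by rewrite io2 pt_o2; apply: idealMl => //; apply: Mu; rewrite ?o1_neq0 ?o1_neq2.
have : M (u 0 0 * u 0 0) by rewrite -[_ * _]mul1r -(mulVr two_unit) -mulrA; apply: idealMl.
by case/(maximal_prime maxM).
Qed.

(* Either u_1 is a unit mod M (take w = 0), or some u_j with j > 2 is (take
   w = e_{pt j}), or else isotropy and unimodularity force u_0 in M and u_2
   a unit mod M (take w = e_0). *)
Lemma pivot_local (u : vec) (M : R -> Prop) : unimodular u -> bform u u = 0 ->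
  is_maximal_ideal M -> exists2 w : vec, w o2 0 = 0 & ~ M (pivot u w).
Proof.
move=> [z uz1] uu maxM; have [idM [M1 _]] := maxM.
have [Mu1|Mu1] := pselect (M (u o1 0)); last first.
  exists 0; first by rewrite mxE.
  by rewrite pivotE bform_sym bform0r /Defs.qform bform0r mxE !mulr0 !mul0r !subr0 addr0.
have [[j j2 Muj]|Mhigh] := pselect (exists2 j : 'I_N, (2 < j)%N & ~ M (u j 0)).
  exists (ev (pt j)).
    by rewrite evE; case: eqP => // o2j; move: (pt_gt2 j2); rewrite -o2j o2_val.
  by rewrite pivot_ev_pt //; apply: (ideal_notin_congr idM Muj); rewrite addrK.
have Mlow i : i != 0 -> i != o2 -> M (u i 0).
  move=> i0 io2; have [i2|i2] := ltnP 2 i.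
    by apply: contrapT => Mui; apply: Mhigh; exists i.
  suff -> : i = o1 by [].
  by apply: ord_inj; move: i0 io2; rewrite -!val_eqE /= o1_val o2_val; lia.
have Mu0 := isotropic_coord0_mem maxM uu Mlow.
have Mu2 : ~ M (u o2 0).
  move=> Mu2; apply: M1; rewrite -uz1; apply: ideal_sum => // i _; apply: idealMr => //.
  by have [->//|i0] := eqVneq i 0; have [->//|] := eqVneq i o2; apply: Mlow.
exists (ev 0); first by rewrite evE o2_neq0.
rewrite pivot_ev0 => Mpiv; apply: Mu2.
rewrite -(subKr (u o1 0 + 2%:R * u 0 0) (u o2 0)).
by apply: idealB => //; apply: idealD => //; apply: idealMl.
Qed.

(* Once h = ESD(e, w) makes the e-coordinate a of u' = h u a unit, ESD(f, w')
   sends u' to a e + c f, and isotropy gives 2 a c = 0. *)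
Lemma isotropic_reduction (u : vec) : semilocal R -> unimodular u -> bform u u = 0 ->
  exists g a, [/\ EO (fun _ => True) g, a \is a GRing.unit & g *m u = a *: ev o1].
Proof.
move=> SL uU uu.
have [w w2 aU] : exists2 w : vec, w o2 0 = 0 & pivot u w \is a GRing.unit.
  apply: semilocal_unit_value SL.
  - by rewrite mxE.
  - by move=> w w' e w2 w'2; rewrite !mxE w2 w'2 subrr mulr0 addr0.
  - by move=> M [idM _] w w'; apply: pivot_congr.
  - by move=> M; apply: pivot_local.
set a := pivot u w in aU; set h := ESD (ev o1) w.
have EOh : EO (fun _ => True) h.
  by apply: EO_ESD_ev12; [left | rewrite bform_ev ?o1_val // pt_o1].
have [u' hu u'1] : exists2 u', h *m u = u' & u' o1 0 = a by exists (h *m u).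
set w' := a^-1 *: (u' - a *: ev o1 - u' o2 0 *: ev o2).
have aw' : a *: w' = u' - a *: ev o1 - u' o2 0 *: ev o2 by rewrite scalerA mulrV // scale1r.
have EOg : EO (fun _ => True) (ESD (ev o2) w').
  apply: EO_ESD_ev12; [by right | rewrite bform_ev ?o2_val // pt_o2 !mxE].
  by rewrite u'1 !eqxx o1_neq2 /= mulr1 mulr0 subr0 subrr mulr0.
set c := u' o2 0 + bform w' u' - qform w' * a.
have gu' : ESD (ev o2) w' *m u' = a *: ev o1 + c *: ev o2.
  rewrite ESD_apply bform_ev ?o2_val // pt_o2 u'1 aw'.
  by apply/matrixP => i j; rewrite /c !mxE; ring.
exists (ESD (ev o2) w' *m h), a; split => //; first exact: gg_mul.
rewrite -mulmxA hu gu' (_ : c = 0) ?scale0r ?addr0 //.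
have : (2%:R * a) * c = 0.
  rewrite -[RHS]uu -(proj2 (EO_isometry EOh)) hu -(proj2 (EO_isometry EOg)) gu'.
  rewrite !bformDl !bformDr !bformZl !bformZr !bform_ev_ev ?o1_val ?o2_val //.
  by rewrite pt_o1 pt_o2 !eqxx o1_neq2 o2_neq1 /=; ring.
have a2U : 2%:R * a \is a GRing.unit by rewrite unitrM two_unit.
by move=> ac0; rewrite -[c](mulKr a2U) ac0 mulr0.
Qed.

Lemma ESD_EO_rel (I : R -> Prop) (u v : vec) : semilocal R -> is_ideal I ->
  unimodular u -> bform u u = 0 -> (forall i, I (v i 0)) -> bform u v = 0 ->
  EO_rel I (ESD u v).
Proof.
move=> SL idI uU uu Iv uv.
have [g [a [EOg aU gu]]] := isotropic_reduction SL uU uu.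
have [gU gf] := EO_isometry EOg.
have -> : ESD u v = invmx g *m ESD (ev o1) (a *: (g *m v)) *m invmx (invmx g).
  by rewrite invmxK -ESD_scale -gu -mulmxA -ESD_conj // mulKmx.
apply: EO_rel_conj; first exact: gg_inv.
apply: EO_rel_ESD_ev1 => // [i|].
  by rewrite !mxE; apply: idealMl => //; apply: ideal_sum => // j _; apply: idealMl.
by rewrite bformZr -bformZl -gu gf uv.
Qed.

End HyperbolicPair.

End TwoUnit.
End Form.

Theorem mainTheorem9 (R : comUnitRingType) (I : R -> Prop) (n : nat)
  (u v : 'cV[R]_((n.*2).+1)) :
  semilocal R -> (2%:R : R) \is a GRing.unit -> is_ideal I -> (3 <= n)%N ->
  unimodular u -> qform u = 0 ->
  (forall i, I (v i 0)) -> bform u v = 0 ->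
  EO_rel I (ESD u v).
Proof.
move=> SL two_unit idI n3 uU qu Iv uv.
apply: ESD_EO_rel => //; first lia.
by rewrite qformE // qu mulr0.
Qed.
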